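(* Let $K$ be an algebraically closed field with $\operatorname{char}K\neq 2$, and let $f$ be a Lie polynomial (not necessarily homogeneous) in $x_1,\dots,x_m$, evaluated on $\operatorname{sl}_2(K)$. Then $\operatorname{Im} f$ is one of: $\{0\}$; $\operatorname{sl}_2(K)$; or the set consisting of $0$ and all non-nilpotent trace-zero $2\times 2$ matrices.
   Context: A Lie polynomial is an element of the free Lie algebra on $x_1,\dots,x_m$, i.e. a linear combination of Lie monomials built from the letters by iterated brackets; it is viewed as an associative polynomial via $[a,b]=ab-ba$. $\operatorname{sl}_2(K)$ is the Lie algebra of trace-zero $2\times 2$ matrices, and $\operatorname{Im} f=\{f(a_1,\dots,a_m):a_i\in\operatorname{sl}_2(K)\}$. *)

From HB Require Import structures.
From mathcomp Require Import all_boot all_order all_algebra all_field.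
Set Implicit Arguments. Unset Strict Implicit. Unset Printing Implicit Defensive.
Import GRing.Theory.
Local Open Scope ring_scope.

(* Lie terms over K in the letters x_0, ..., x_(m-1): linear combinations of
   iterated brackets of letters.  Every element of the free Lie algebra on
   m letters is represented by such a term, and the evaluation on any Lie
   algebra (here 2x2 matrices with [a,b] = ab - ba) is independent of the
   representative. *)
Inductive lie_poly (K : Type) (m : nat) : Type :=
| LZero : lie_poly K m
| LVar : 'I_m -> lie_poly K m
| LAdd : lie_poly K m -> lie_poly K m -> lie_poly K m
| LScale : K -> lie_poly K m -> lie_poly K m
| LBr : lie_poly K m -> lie_poly K m -> lie_poly K m.

Definition lie_br (K : nzRingType) (A B : 'M[K]_2) : 'M[K]_2 := A * B - B * A.

Fixpoint lie_eval (K : nzRingType) (m : nat) (a : 'I_m -> 'M[K]_2)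
  (f : lie_poly K m) : 'M[K]_2 :=
  match f with
  | LZero => 0
  | LVar i => a i
  | LAdd f g => lie_eval a f + lie_eval a g
  | LScale c f => c *: lie_eval a f
  | LBr f g => lie_br (lie_eval a f) (lie_eval a g)
  end.

Definition in_sl2 (K : nzRingType) (A : 'M[K]_2) : Prop := \tr A = 0.

Definition lie_image (K : nzRingType) (m : nat) (f : lie_poly K m)
  (M : 'M[K]_2) : Prop :=
  exists a : 'I_m -> 'M[K]_2, (forall i, in_sl2 (a i)) /\ lie_eval a f = M.

Definition nilpotent_mx (K : nzRingType) (A : 'M[K]_2) : Prop :=
  exists n : nat, A ^+ n = 0.

From Stdlib Require Import Classical.
From HB Require Import structures.
From mathcomp Require Import all_boot all_order all_algebra all_field.
From mathcomp Require Import zify ring.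
Set Implicit Arguments. Unset Strict Implicit. Unset Printing Implicit Defensive.
Import GRing.Theory.
Local Open Scope ring_scope.

(* If f(a) is a non-zero value, write each a_i in the basis diag(1,-1),
   [[0,1],[1,0]], [[0,1],[-1,0]] of sl_2(K) (here char K <> 2 is used) and
   deform this basis to diag(x,-x), [[0,1],[y,0]], [[0,x],[-xy,0]].  Its
   structure constants are polynomials in X = x^2 and Y = y, so the value of f
   on the deformed tuple has coordinates T1, T2, T3 in K[X,Y] specialising to
   those of f(a) at X = Y = 1, and determinant -(X T1^2 + Y T2^2 - XY T3^2).
   This is the norm form of the quaternion algebra (X,Y), which is anisotropic
   by a degree-parity argument; hence the determinant is a non-zero polynomial
   vanishing at the origin and takes every value of K.  Trace-zero matrices
   with the same non-zero determinant are conjugate, as are all non-zero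
   nilpotent ones, and Im f is closed under conjugation. *)

Definition mx2 (R : nzRingType) (a b c d : R) : 'M[R]_2 :=
  \matrix_(i < 2, j < 2)
    if (i : nat) == 0%N then (if (j : nat) == 0%N then a else b)
    else (if (j : nat) == 0%N then c else d).

Lemma mx2_eta (R : nzRingType) (A : 'M[R]_2) :
  A = mx2 (A 0 0) (A 0 1) (A 1 0) (A 1 1).
Proof.
by apply/matrixP => -[[|[|//]] ?] [[|[|//]] ?]; rewrite mxE /=;
  congr (A _ _); apply: val_inj.
Qed.

Lemma mx2_0 (R : nzRingType) : 0 = mx2 0 0 0 0 :> 'M[R]_2.
Proof. by rewrite [LHS]mx2_eta !mxE. Qed.

Lemma mx2_add (R : nzRingType) (a b c d a' b' c' d' : R) :
  mx2 a b c d + mx2 a' b' c' d' = mx2 (a + a') (b + b') (c + c') (d + d').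
Proof. by apply/matrixP => -[[|[|//]] ?] [[|[|//]] ?]; rewrite !mxE. Qed.

Lemma mx2_opp (R : nzRingType) (a b c d : R) :
  - mx2 a b c d = mx2 (- a) (- b) (- c) (- d).
Proof. by apply/matrixP => -[[|[|//]] ?] [[|[|//]] ?]; rewrite !mxE. Qed.

Lemma mx2_scale (R : nzRingType) (k a b c d : R) :
  k *: mx2 a b c d = mx2 (k * a) (k * b) (k * c) (k * d).
Proof. by apply/matrixP => -[[|[|//]] ?] [[|[|//]] ?]; rewrite !mxE. Qed.

Lemma mx2_mul (R : nzRingType) (a b c d a' b' c' d' : R) :
  mx2 a b c d * mx2 a' b' c' d' =
  mx2 (a * a' + b * c') (a * b' + b * d') (c * a' + d * c') (c * b' + d * d').
Proof.
apply/matrixP => -[[|[|//]] ?] [[|[|//]] ?];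
  by rewrite !mxE !big_ord_recl big_ord0 addr0 !mxE.
Qed.

Lemma det_mx2 (R : comNzRingType) (a b c d : R) :
  \det (mx2 a b c d) = a * d - b * c.
Proof.
rewrite (expand_det_row _ 0) !big_ord_recl big_ord0 addr0.
by rewrite /cofactor !det_mx11 !mxE /= /bump /= expr0 expr1; ring.
Qed.

Lemma tr_mx2 (R : nzRingType) (a b c d : R) : \tr (mx2 a b c d) = a + d.
Proof. by rewrite /mxtrace !big_ord_recl big_ord0 addr0 !mxE. Qed.

Lemma unit_mx2 (F : fieldType) (a b c d : F) :
  a * d - b * c != 0 -> mx2 a b c d \is a GRing.unit.
Proof. by move=> h; rewrite -[_ \is a _]/(_ \in unitmx) unitmxE det_mx2 unitfE. Qed.

Lemma sl2_mx2 (R : nzRingType) (A : 'M[R]_2) :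
  \tr A = 0 -> A = mx2 (A 0 0) (A 0 1) (A 1 0) (- A 0 0).
Proof.
move=> trA; have trA' : A 0 0 + A 1 1 = 0 by rewrite -(tr_mx2 _ (A 0 1) (A 1 0)) -mx2_eta.
rewrite {1}[A]mx2_eta; congr mx2; apply/eqP.
by rewrite -addr_eq0 addrC trA'.
Qed.

Lemma eq_lie_eval (R : nzRingType) m (a b : 'I_m -> 'M[R]_2) (f : lie_poly R m) :
  a =1 b -> lie_eval a f = lie_eval b f.
Proof. by move=> eq_ab; elim: f => //= [f -> g ->|c f ->|f -> g ->]. Qed.

Lemma lie_eval0 (R : nzRingType) m (f : lie_poly R m) :
  lie_eval (fun=> 0) f = 0.
Proof.
elim: f => //= [f -> g ->|c f ->|f -> g ->]; 
  by rewrite ?addr0 ?scaler0 /lie_br ?mulr0 ?subrr.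
Qed.

Lemma tr_lie_eval (R : comNzRingType) m (a : 'I_m -> 'M[R]_2) (f : lie_poly R m) :
  (forall i, \tr (a i) = 0) -> \tr (lie_eval a f) = 0.
Proof.
move=> tra; elim: f => /= [|i|f IHf g IHg|c f IHf|f _ g _].
- exact: mxtrace0.
- exact: tra.
- by rewrite mxtraceD IHf IHg addr0.
- by rewrite mxtraceZ IHf mulr0.
- by rewrite /lie_br linearB /= -!mulmxE mxtrace_mulC subrr.
Qed.

Lemma lie_eval_conj (R : comUnitRingType) m (P : 'M[R]_2)
    (a : 'I_m -> 'M[R]_2) (f : lie_poly R m) :
  P \is a GRing.unit ->
  lie_eval (fun i => P * a i * P^-1) f = P * lie_eval a f * P^-1.
Proof.
move=> Pu; have conjM X Y : P * X * P^-1 * (P * Y * P^-1) = P * (X * Y) * P^-1.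
  by rewrite !mulrA divrK // -!mulrA.
elim: f => //= [|f -> g ->|c f ->|f -> g ->].
- by rewrite mulr0 mul0r.
- by rewrite mulrDr mulrDl.
- by rewrite -scalerAr -scalerAl.
- by rewrite /lie_br !conjM mulrBr mulrBl.
Qed.

Lemma lie_image0 (R : comNzRingType) m (f : lie_poly R m) : lie_image f 0.
Proof. by exists (fun=> 0); split; [move=> i; apply: mxtrace0 | apply: lie_eval0]. Qed.

Lemma lie_image_sl2 (R : comNzRingType) m (f : lie_poly R m) (M : 'M[R]_2) :
  lie_image f M -> in_sl2 M.
Proof. by case=> a [tra <-]; apply: tr_lie_eval. Qed.

Lemma lie_image_conj (R : comUnitRingType) m (f : lie_poly R m) (P M : 'M[R]_2) :
  P \is a GRing.unit -> lie_image f M -> lie_image f (P * M * P^-1).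
Proof.
move=> Pu [a [tra <-]]; exists (fun i => P * a i * P^-1); split; last first.
  exact: lie_eval_conj.
move=> i; rewrite /in_sl2 -mulmxE mxtrace_mulC mulmxA mulmxE mulVr // mul1r.
exact: tra.
Qed.

Lemma closed_poly_surj (F : closedFieldType) (q : {poly F}) (d : F) :
  (1 < size q)%N -> exists x, q.[x] = d.
Proof.
move=> q_gt1; have size_qd : size (q - d%:P) = size q.
  by rewrite size_polyDl // size_polyN (leq_ltn_trans (size_polyC_leq1 d)).
have /closed_rootP [x] : size (q - d%:P) != 1%N by rewrite size_qd gtn_eqF.
by rewrite /root !hornerE subr_eq0 => /eqP; exists x.
Qed.

Lemma closed_sqrt (F : closedFieldType) (z : F) : exists x, x ^+ 2 = z.
Proof.
have [|x] := @closed_poly_surj F 'X^2 z; first by rewrite size_polyXn.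
by rewrite hornerXn; exists x.
Qed.

Lemma closed_poly_nonroot (F : closedFieldType) (q : {poly F}) :
  q != 0 -> exists x, q.[x] != 0.
Proof.
move=> q0; have [|x qx1] := @closed_poly_surj _ (q * 'X) 1.
  by rewrite size_mulX // ltnS lt0n size_poly_eq0.
by exists x; apply: contra_eq_neq qx1; rewrite hornerMX => ->; rewrite mul0r eq_sym oner_eq0.
Qed.

Lemma sl2_nilpotentE (F : fieldType) (A : 'M[F]_2) :
  \tr A = 0 -> nilpotent_mx A <-> \det A = 0.
Proof.
move=> trA; split=> [[n An0]|detA0].
  apply/eqP; apply: contraT => detA.
  have : A ^+ n \is a GRing.unit.
    by rewrite unitrX // -[_ \is a _]/(_ \in unitmx) unitmxE unitfE.
  by rewrite An0 unitr0.
exists 2%N; move: detA0; rewrite (sl2_mx2 trA) det_mx2 expr2 mx2_mul mx2_0.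
by move/eqP; rewrite subr_eq0 eq_sym => /eqP hbc; congr mx2; ring: hbc.
Qed.

Lemma sl2_diagonalize (F : fieldType) (A : 'M[F]_2) (l : F) : (2%:R : F) != 0 ->
  \tr A = 0 -> l != 0 -> l ^+ 2 = - \det A ->
  exists2 P, P \is a GRing.unit & A * P = P * mx2 l 0 0 (- l).
Proof.
move=> two trA l0; rewrite (sl2_mx2 trA) det_mx2.
set a := A 0 0; set b := A 0 1; set c := A 1 0 => hl.
have hbc : b * c = l ^+ 2 - a * a by rewrite hl; ring.
have [al|al] := eqVneq (a + l) 0.
  have ea : a = - l by apply/eqP; rewrite -addr_eq0 al.
  exists (mx2 b (a - l) (l - a) c); last by rewrite !mx2_mul; congr mx2; ring: hbc ea.
  apply: unit_mx2; have -> : b * c - (a - l) * (l - a) = 2%:R * 2%:R * l * l.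
    by ring: hbc ea.
  by rewrite !mulf_neq0.
exists (mx2 (a + l) b c (- (a + l))); last by rewrite !mx2_mul; congr mx2; ring: hbc.
apply: unit_mx2; have -> : (a + l) * - (a + l) - b * c = - (2%:R * l * (a + l)).
  by ring: hbc.
by rewrite oppr_eq0 !mulf_neq0.
Qed.

Lemma sl2_nilpotent_normal (F : fieldType) (A : 'M[F]_2) :
  \tr A = 0 -> \det A = 0 -> A != 0 ->
  exists2 P, P \is a GRing.unit & A * P = P * mx2 0 1 0 0.
Proof.
move=> trA; rewrite (sl2_mx2 trA) det_mx2.
set a := A 0 0; set b := A 0 1; set c := A 1 0.
move/eqP; rewrite subr_eq0 eq_sym => /eqP hbc A0.
have [c0|c0] := eqVneq c 0.
  have [b0|b0] := eqVneq b 0.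
    move: hbc A0; rewrite c0 b0 mulr0 mulrN => /eqP; rewrite eq_sym oppr_eq0.
    by rewrite mulf_eq0 orbb => /eqP->; rewrite oppr0 -mx2_0 eqxx.
  exists (mx2 b 0 (- a) 1); last by rewrite !mx2_mul; congr mx2; ring: hbc.
  by apply: unit_mx2; rewrite mulr1 mul0r subr0.
exists (mx2 a 1 c 0); last by rewrite !mx2_mul; congr mx2; ring: hbc.
by apply: unit_mx2; rewrite mulr0 mul1r sub0r oppr_eq0.
Qed.

Lemma conj_of_intertwine (R : unitRingType) (A B D P Q : R) :
  P \is a GRing.unit -> Q \is a GRing.unit -> A * P = P * D -> B * Q = Q * D ->
  A = P / Q * B * (P / Q)^-1.
Proof.
move=> Pu Qu AP BQ.
by rewrite -[A](mulrK Pu) AP -[D](mulKr Qu) -BQ invrM ?unitrV // invrK !mulrA.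
Qed.

Lemma sl2_conj_det (F : closedFieldType) (A B : 'M[F]_2) : (2%:R : F) != 0 ->
  \tr A = 0 -> \tr B = 0 -> \det A = \det B -> \det A != 0 ->
  exists2 P, P \is a GRing.unit & A = P * B * P^-1.
Proof.
move=> two trA trB dAB dA0; have [l hl] := closed_sqrt (- \det A).
have l0 : l != 0 by apply: contraNneq dA0 => l0; rewrite -oppr_eq0 -hl l0 expr0n.
have [P Pu AP] := sl2_diagonalize two trA l0 hl.
have [Q Qu BQ] := sl2_diagonalize two trB l0 (etrans hl (congr1 -%R dAB)).
by exists (P / Q); [rewrite unitrMr ?unitrV | apply: conj_of_intertwine AP BQ].
Qed.

Lemma sl2_conj_nilpotent (F : fieldType) (A B : 'M[F]_2) :
  \tr A = 0 -> \tr B = 0 -> \det A = 0 -> \det B = 0 -> A != 0 -> B != 0 ->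
  exists2 P, P \is a GRing.unit & A = P * B * P^-1.
Proof.
move=> trA trB dA dB A0 B0.
have [P Pu AP] := sl2_nilpotent_normal trA dA A0.
have [Q Qu BQ] := sl2_nilpotent_normal trB dB B0.
by exists (P / Q); [rewrite unitrMr ?unitrV | apply: conj_of_intertwine AP BQ].
Qed.

Lemma size_sqr (R : idomainType) (p : {poly R}) :
  p != 0 -> size (p * p) = (2 * size p).-1.
Proof. by move=> p0; rewrite size_mul //; congr _.-1; lia. Qed.

Lemma odd_size_sqr (R : idomainType) (p : {poly R}) : p != 0 -> odd (size (p * p)).
Proof.
move=> p0; rewrite size_sqr //; have : (0 < size p)%N by rewrite size_poly_gt0.
case: (size p) => // n _.
have -> : (2 * n.+1).-1 = (n.*2).+1 by lia.
by rewrite /= odd_double.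
Qed.

Lemma sqr_eq_X_mul_sqr (R : idomainType) (p q : {poly R}) :
  p * p = 'X * (q * q) -> p = 0.
Proof.
move=> pq; have [q0|q0] := eqVneq q 0.
  by move/eqP: pq; rewrite q0 !mul0r mulr0 mulf_eq0 orbb => /eqP.
apply/eqP; apply: contraT => p0.
have := congr1 (fun r : {poly R} => size r) pq.
rewrite ['X * _]mulrC size_mulX ?mulf_neq0 // !size_sqr //.
by move: p0 q0; rewrite -!size_poly_gt0; lia.
Qed.

Lemma size_polyB_lead (R : nzRingType) (p q : {poly R}) :
  size p = size q -> lead_coef p != lead_coef q -> size (p - q) = size p.
Proof.
move=> pq lpq; have p_gt0 : (0 < size p)%N.
  rewrite lt0n size_poly_eq0; apply: contra_neq lpq => p0.
  by move: pq; rewrite p0 size_poly0 => /esym/eqP; rewrite size_poly_eq0 => /eqP->.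
apply/eqP; rewrite eqn_leq (leq_trans (size_polyD _ _)) ?size_polyN -?pq ?maxnn //=.
have : ((size p).-1 < size (p - q)%R)%N.
  rewrite ltnNge; apply/negP => /leq_sizeP/(_ _ (leqnn _))/eqP.
  by rewrite coefB subr_eq0 => /eqP e; move: lpq; rewrite /lead_coef -pq e eqxx.
by case: (size p) p_gt0.
Qed.

Lemma odd_size_sqr_subCsqr (R : idomainType) (x : R) (p q : {poly R}) :
  x != 0 -> (forall a b : R, a * a = x * (b * b) -> a = 0) ->
  (p != 0) || (q != 0) -> odd (size (p * p - x%:P * (q * q))).
Proof.
move=> x0 x_nonsqr; have [->|q0] := eqVneq q 0.
  by rewrite orbF mul0r mulr0 subr0; apply: odd_size_sqr.
have [->|p0 _] := eqVneq p 0.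
  by rewrite mul0r sub0r size_polyN size_Cmul // odd_size_sqr.
have lead_neq : lead_coef (p * p) != lead_coef (x%:P * (q * q)).
  apply: contra_neq p0; rewrite !lead_coefM lead_coefC => /x_nonsqr /eqP.
  by rewrite lead_coef_eq0 => /eqP.
have [lt|gt|eq] := ltngtP (size (x%:P * (q * q))) (size (p * p)).
- by rewrite size_polyDl ?size_polyN // odd_size_sqr.
- by rewrite addrC size_polyDl ?size_polyN // size_Cmul // odd_size_sqr.
- by rewrite size_polyB_lead // odd_size_sqr.
Qed.

Lemma quaternion_norm_anisotropic (R : idomainType) (c1 c2 c3 : {poly {poly R}}) :
  'X * (c1 * c1) + 'Y * (c2 * c2) - 'X * 'Y * (c3 * c3) = 0 ->
  [/\ c1 = 0, c2 = 0 & c3 = 0].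
Proof.
set x : {poly R} := 'X; have x0 : x != 0 by rewrite polyX_eq0.
have x_nonsqr := @sqr_eq_X_mul_sqr R.
move=> norm0; set B := c1 * c1 - x%:P * (c3 * c3).
have XB : x%:P * (c2 * c2) = - ('X * B).
  by apply/eqP; rewrite -subr_eq0 opprK -norm0 /B; apply/eqP; ring.
have /andP[/eqP c1_0 /eqP c3_0] : (c1 == 0) && (c3 == 0).
  apply: contraT; rewrite negb_and => c13.
  have oddB := odd_size_sqr_subCsqr x0 x_nonsqr c13; rewrite -/B in oddB.
  have B0 : B != 0 by apply: contraTneq oddB => ->; rewrite size_poly0.
  move/(congr1 (fun r : {poly {poly R}} => size r)): XB.
  rewrite /= size_polyN ['X * _]mulrC size_mulX // -/B.
  have [->|c2_0] := eqVneq c2 0; first by rewrite !mulr0 size_poly0.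
  by rewrite size_Cmul // => eq_size; move: (odd_size_sqr c2_0); rewrite eq_size /= oddB.
split=> //; move/eqP: XB; rewrite /B c1_0 c3_0 !mulr0 subr0 mulr0 oppr0.
by rewrite !mulf_eq0 polyC_eq0 (negPf x0) orbb => /eqP.
Qed.

Lemma horner2_map (R : comNzRingType) (N : {poly {poly R}}) (x y : R) :
  N.[x, y] = (map_poly (horner_eval y) N).[x].
Proof. by rewrite -[x in RHS](hornerC x y) -horner_evalE horner_map. Qed.

Lemma closed_poly2_surj (F : closedFieldType) (N : {poly {poly F}}) :
  N != 0 -> N.[0, 0] = 0 -> forall d, exists x y, N.[x, y] = d.
Proof.
move=> N0 N00 d; have [N_gt1|N_le1] := ltnP 1 (size N).
  have [y Ny0] : exists y, (lead_coef N).[y] != 0.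
    by apply: closed_poly_nonroot; rewrite lead_coef_eq0.
  have [x Nxy] : exists x, (map_poly (horner_eval y) N).[x] = d.
    by apply: closed_poly_surj; rewrite size_map_poly_id0 ?horner_evalE.
  by exists x, y; rewrite horner2_map.
move: N0 N00; rewrite (size1_polyC N_le1) polyC_eq0 hornerC.
set c := N`_0 => c0 c00; have [|y cy] := closed_poly_surj d (_ : 1 < size c)%N.
  rewrite ltnNge; apply: contra c0 => /size1_polyC ->.
  by rewrite -horner_coef0 c00.
by exists 0, y; rewrite hornerC.
Qed.

(* Unlike [hornerE], this leaves products in a form that [ring] recognises. *)
Definition horner_ringE := (hornerD, hornerN, hornerM, hornerX, hornerC, hornerMn).

(* Coordinates over K[X,Y] in the deformed basis diag(x,-x), [[0,1],[y,0]],
   [[0,x],[-xy,0]]: [qmx x y] realises them at X = x^2, Y = y, [qbr] is the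
   bracket and [qnorm] the determinant in these coordinates. *)
Record qcoord (R : nzRingType) :=
  Qcoord { qc1 : {poly {poly R}}; qc2 : {poly {poly R}}; qc3 : {poly {poly R}} }.

Definition qbr (R : nzRingType) (a b : qcoord R) : qcoord R :=
  Qcoord (- 2%:R * 'Y * (qc2 a * qc3 b - qc3 a * qc2 b))
         (- 2%:R * 'X * (qc3 a * qc1 b - qc1 a * qc3 b))
         (2%:R * (qc1 a * qc2 b - qc2 a * qc1 b)).

Fixpoint qeval (R : nzRingType) m (t : 'I_m -> qcoord R) (f : lie_poly R m) :
    qcoord R :=
  match f with
  | LZero => Qcoord 0 0 0
  | LVar i => t i
  | LAdd f g => let a := qeval t f in let b := qeval t g in
      Qcoord (qc1 a + qc1 b) (qc2 a + qc2 b) (qc3 a + qc3 b)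
  | LScale c f => let a := qeval t f in
      Qcoord (c%:P%:P * qc1 a) (c%:P%:P * qc2 a) (c%:P%:P * qc3 a)
  | LBr f g => qbr (qeval t f) (qeval t g)
  end.

Definition qmx (R : comNzRingType) (x y : R) (T : qcoord R) : 'M[R]_2 :=
  let e1 := (qc1 T).[x ^+ 2, y] in
  let e2 := (qc2 T).[x ^+ 2, y] in
  let e3 := (qc3 T).[x ^+ 2, y] in
  mx2 (e1 * x) (e2 + e3 * x) (e2 * y - e3 * x * y) (- (e1 * x)).

Definition qnorm (R : nzRingType) (T : qcoord R) : {poly {poly R}} :=
  - ('X * (qc1 T * qc1 T) + 'Y * (qc2 T * qc2 T) - 'X * 'Y * (qc3 T * qc3 T)).

Lemma qmx_qeval (R : comNzRingType) m (x y : R) (t : 'I_m -> qcoord R)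
    (f : lie_poly R m) :
  qmx x y (qeval t f) = lie_eval (fun i => qmx x y (t i)) f.
Proof.
elim: f => [|i|f IHf g IHg|c f IHf|f IHf g IHg] //=;
  rewrite -?IHf -?IHg /qmx /= !horner_ringE.
- by rewrite mx2_0; congr mx2; ring.
- by rewrite mx2_add; congr mx2; ring.
- by rewrite mx2_scale; congr mx2; ring.
- rewrite /lie_br !mx2_mul mx2_opp mx2_add; congr mx2; ring.
Qed.

Lemma tr_qmx (R : comNzRingType) (x y : R) (T : qcoord R) : \tr (qmx x y T) = 0.
Proof. by rewrite tr_mx2 addrN. Qed.

Lemma det_qmx (R : comNzRingType) (x y : R) (T : qcoord R) :
  \det (qmx x y T) = (qnorm T).[x ^+ 2, y].
Proof.
by rewrite /qmx det_mx2 !horner_ringE; ring.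
Qed.

Lemma lie_image_det_surj (F : closedFieldType) m (f : lie_poly F m) (M : 'M[F]_2) :
  (2%:R : F) != 0 -> lie_image f M -> M != 0 ->
  forall d, exists2 B, lie_image f B & \det B = d.
Proof.
move=> two [a [tra faM]] M0 d.
(* The coordinates of [a i] are constants: the deformed basis at x = y = 1. *)
pose t i := Qcoord (a i 0 0)%:P%:P ((a i 0 1 + a i 1 0) / 2%:R)%:P%:P
                   ((a i 0 1 - a i 1 0) / 2%:R)%:P%:P.
have qmx_t i : qmx 1 1 (t i) = a i.
  by rewrite [RHS](sl2_mx2 (tra i)) /qmx /= !horner_ringE; congr mx2; field.
set T := qeval t f; have qmxT : qmx 1 1 T = M.
  by rewrite qmx_qeval -faM; apply: eq_lie_eval.
have NT0 : qnorm T != 0.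
  apply: contra_neq M0; rewrite -qmxT => /eqP; rewrite oppr_eq0 => /eqP.
  rewrite /qmx; case/quaternion_norm_anisotropic => -> -> ->.
  by rewrite !horner_ringE !mul0r addr0 subrr oppr0 -mx2_0.
have NT00 : (qnorm T).[0, 0] = 0 by rewrite !horner_ringE; ring.
have [X [y <-]] := closed_poly2_surj NT0 NT00 d.
have [x <-] := closed_sqrt X.
exists (qmx x y T); last exact: det_qmx.
by exists (fun i => qmx x y (t i)); split; [move=> i; apply: tr_qmx | rewrite qmx_qeval].
Qed.

Lemma lie_image_non_nilpotent (F : closedFieldType) m (f : lie_poly F m)
    (M A : 'M[F]_2) :
  (2%:R : F) != 0 -> lie_image f M -> M != 0 ->
  \tr A = 0 -> \det A != 0 -> lie_image f A.
Proof.
move=> two fM M0 trA dA; have [B fB dB] := lie_image_det_surj two fM M0 (\det A).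
have [P Pu ->] := sl2_conj_det two trA (lie_image_sl2 fB) (esym dB) dA.
exact: lie_image_conj.
Qed.

Lemma lie_image_nilpotent (F : fieldType) m (f : lie_poly F m) (N A : 'M[F]_2) :
  lie_image f N -> N != 0 -> \det N = 0 ->
  \tr A = 0 -> \det A = 0 -> A != 0 -> lie_image f A.
Proof.
move=> fN N0 dN trA dA A0.
have [P Pu ->] := sl2_conj_nilpotent trA (lie_image_sl2 fN) dA dN A0 N0.
exact: lie_image_conj.
Qed.

Theorem theorem1p16 (K : closedFieldType) (m : nat) (f : lie_poly K m) :
  (2%:R : K) != 0 ->
  (forall M : 'M[K]_2, lie_image f M <-> M = 0)
  \/ (forall M : 'M[K]_2, lie_image f M <-> in_sl2 M)
  \/ (forall M : 'M[K]_2,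
        lie_image f M <-> (M = 0 \/ (in_sl2 M /\ ~ nilpotent_mx M))).
Proof.
move=> two.
have [[M [fM M0]]|im0] := classic (exists M, lie_image f M /\ M != 0); last first.
  left=> M; split=> [fM|->]; last exact: lie_image0.
  by apply/eqP; apply: contraT => M0; case: im0; exists M.
have [[N [fN [N0 dN]]]|no_nil] :=
  classic (exists N, lie_image f N /\ N != 0 /\ \det N = 0).
  right; left=> A; split=> [|trA]; first exact: lie_image_sl2.
  have [->|A0] := eqVneq A 0; first exact: lie_image0.
  have [dA|dA] := eqVneq (\det A) 0; first exact: lie_image_nilpotent fN N0 dN trA dA A0.
  exact: lie_image_non_nilpotent two fM M0 trA dA.
right; right=> A; split=> [fA|[->|[trA nilA]]]; last first.
- apply: (lie_image_non_nilpotent two fM M0 trA).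
  by apply/eqP => dA; apply: nilA; apply/(sl2_nilpotentE trA).
- exact: lie_image0.
have [->|A0] := eqVneq A 0; [by left | right; have trA := lie_image_sl2 fA].
by split=> // /(sl2_nilpotentE trA) dA; apply: no_nil; exists A.
Qed.
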